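(* Let $\Lambda=\{\Lambda_\omega\in B(\mathcal H,\mathcal K_\omega):\omega\in\Omega\}$ and $\Theta=\{\Theta_\omega\in B(\mathcal H,\mathcal K_\omega):\omega\in\Omega\}$ be two disjoint continuous $g$-frames for $\mathcal H$. Then $\{\Lambda_\omega+\Theta_\omega\in B(\mathcal H,\mathcal K_\omega):\omega\in\Omega\}$ is a continuous $g$-frame for $\mathcal H$.
   Context: $\mathcal H$ is a complex Hilbert space, $(\Omega,\mu)$ a measure space with positive measure $\mu$, and $\{\mathcal K_\omega:\omega\in\Omega\}$ a family of complex Hilbert spaces. A map $F$ on $\Omega$ with $F(\omega)\in\mathcal K_\omega$ is strongly measurable if it is measurable as a map $\Omega\to\bigoplus_\omega\mathcal K_\omega$; $\widehat{\mathcal K}$ is the Hilbert space of strongly measurable such $F$ with $\int_\Omega\|F(\omega)\|^2d\mu<\infty$, inner product $\langle F,G\rangle=\int_\Omega\langle F(\omega),G(\omega)\rangle d\mu$. A family $\Lambda=\{\Lambda_\omega\in B(\mathcal H,\mathcal K_\omega)\}$ is a continuous $g$-frame for $\mathcal H$ if $\omega\mapsto\Lambda_\omega f$ is strongly measurable for each $f$ and there are $0<A\le B<\infty$ with $A\|f\|^2\le\int_\Omega\|\Lambda_\omega f\|^2d\mu(\omega)\le B\|f\|^2$ for all $f\in\mathcal H$. Its analysis operator $T_\Lambda^*:\mathcal H\to\widehat{\mathcal K}$ is $(T_\Lambda^*f)(\omega)=\Lambda_\omega f$. Two continuous $g$-frames $\Lambda,\Theta$ are disjoint if $\mathrm{Range}\,T_\Lambda^*\cap\mathrm{Range}\,T_\Theta^*=\{0\}$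 and $\mathrm{Range}\,T_\Lambda^*+\mathrm{Range}\,T_\Theta^*$ is a closed subspace of $\widehat{\mathcal K}$. *)

From HB Require Import structures.
From mathcomp Require Import all_boot all_order all_algebra complex.
From mathcomp Require Import all_classical all_reals all_analysis.
Import Order.TTheory GRing.Theory Num.Theory.

Set Implicit Arguments.
Unset Strict Implicit.
Unset Printing Implicit Defensive.

Local Open Scope classical_set_scope.
Local Open Scope ring_scope.

HB.mixin Record Lmodule_isComplexInner (R : realType) V
    of GRing.Lmodule R[i] V := {
  cinner : V -> V -> R[i];
  cinnerDl : forall (a : R[i]) (x y z : V),
      cinner (a *: x + y) z = a * cinner x z + cinner y z;
  cinnerC : forall x y : V, cinner x y = (cinner y x)^*;
  cinner_ge0 : forall x : V, 0 <= cinner x x;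
  cinner_eq0 : forall x : V, cinner x x = 0 -> x = 0
}.

#[short(type="preHilbertType")]
HB.structure Definition PreHilbert (R : realType) :=
  {V of Lmodule_isComplexInner R V & GRing.Lmodule R[i] V}.

Definition hnorm (R : realType) (V : preHilbertType R) (x : V) : R :=
  Num.sqrt (complex.Re (cinner x x)).

Definition hcauchy (R : realType) (V : preHilbertType R) (u : nat -> V) :=
  forall e : R, 0 < e -> exists N : nat, forall m n : nat,
    (N <= m)%N -> (N <= n)%N -> hnorm (u m - u n) < e.

Definition hconverges (R : realType) (V : preHilbertType R) (u : nat -> V)
    (l : V) :=
  forall e : R, 0 < e -> exists N : nat, forall n : nat,
    (N <= n)%N -> hnorm (u n - l) < e.

HB.mixin Record PreHilbert_isComplete (R : realType) V
    of PreHilbert R V := {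
  hcomplete : forall u : nat -> V, hcauchy u -> exists l : V, hconverges u l
}.

#[short(type="hilbertType")]
HB.structure Definition Hilbert (R : realType) :=
  {V of PreHilbert_isComplete R V & PreHilbert R V}.

Section Defs.
Variable R : realType.

Definition hopen (V : preHilbertType R) (U : set V) :=
  forall x, U x -> exists2 e : R, 0 < e & forall y, hnorm (y - x) < e -> U y.

Definition closed_subspace (V : preHilbertType R) (S : set V) :=
  S 0 /\ (forall (a : R[i]) x y, S x -> S y -> S (a *: x + y)) /\
  (forall (u : nat -> V) (l : V), (forall n, S (u n)) -> hconverges u l -> S l).

Definition bounded_linear (H K : preHilbertType R) (T : H -> K) :=
  (forall (a : R[i]) (x y : H), T (a *: x + y) = a *: T x + T y) /\
  exists c : R, forall x : H, hnorm (T x) <= c * hnorm x.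

Section Measure.
Context (d : measure_display) (Om : measurableType d)
        (mu : {measure set Om -> \bar R}).
Context (K : hilbertType R).

(* Borel measurability of a map Om -> K (preimages of open sets are
   measurable).  K plays the role of the (internal) direct sum of the
   K_w. *)
Definition strongly_measurable (F : Om -> K) :=
  forall U : set K, hopen U -> measurable (F @^-1` U).

Definition sq_int (F : Om -> K) : \bar R :=
  (\int[mu]_w ((hnorm (F w)) ^+ 2)%:E)%E.

(* F is a (representative of an) element of hat K *)
Definition in_hatK (Ksub : Om -> set K) (F : Om -> K) :=
  strongly_measurable F /\ (forall w, Ksub w (F w)) /\ (sq_int F < +oo)%E.

Context (H : hilbertType R).

Definition cont_gframe (Ksub : Om -> set K) (L : Om -> H -> K) :=
  (forall w, bounded_linear (L w) /\ (forall f, Ksub w (L w f))) /\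
  (forall f : H, strongly_measurable (fun w => L w f)) /\
  exists A B : R, 0 < A /\ A <= B /\
    forall f : H,
      ((A * hnorm f ^+ 2)%:E <= sq_int (fun w => L w f))%E /\
      (sq_int (fun w => L w f) <= (B * hnorm f ^+ 2)%:E)%E.

(* disjointness of two continuous g-frames: the ranges of the analysis
   operators (in hat K, elements identified mu-a.e.) intersect trivially
   and their sum is (sequentially) closed in hat K. *)
Definition gframes_disjoint (Ksub : Om -> set K) (L T : Om -> H -> K) :=
  (forall f g : H, {ae mu, forall w, L w f = T w g} ->
     {ae mu, forall w, L w f = 0}) /\
  (forall (fs gs : nat -> H) (F : Om -> K), in_hatK Ksub F ->
     (fun n => sq_int (fun w => L w (fs n) + T w (gs n) - F w)) @ \oo --> 0%E ->
     exists f g : H, {ae mu, forall w, F w = L w f + T w g}).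

End Measure.
End Defs.

From HB Require Import structures.
From mathcomp Require Import all_boot all_order all_algebra complex.
From mathcomp Require Import all_classical all_reals all_analysis.
From mathcomp Require Import measurable_realfun.
From mathcomp Require Import ring lra.
Import Order.TTheory GRing.Theory Num.Theory.
Local Open Scope classical_set_scope.
Local Open Scope ring_scope.
Set Implicit Arguments.
Unset Strict Implicit.
Unset Printing Implicit Defensive.

(* The map (f, g) |-> L f + T g is injective and has closed range in the space of
   square-integrable sections, so by the open mapping theorem its L^2 norm dominates
   ||f|| + ||g||; for g = f this is the lower frame bound of L + T.
   Since that L^2 space is not available as a Hilbert space, the argument runs on
   the seminorm N(f, g) = ||L f + T g||_2 of H x H. Disjointness makes N a norm, and
   makes it complete: along a fast N-Cauchy sequence the sections converge pointwise
   (Riesz-Fischer), the pointwise limit is a square-integrable section, and the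
   closed-range hypothesis writes it as some L f + T g. The open mapping theorem is
   used in the form "two comparable complete norms are equivalent", proved by the
   Baire category argument. *)


Lemma geometric_lt (R : realType) (b : nat) (c e : R) : (1 < b)%N -> 0 < e ->
  exists N : nat, forall n, (N <= n)%N -> c / b%:R ^+ n < e.
Proof.
move=> b1 e0; exists (Num.trunc (c / e)).+1 => n Nn.
rewrite ltr_pdivrMr ?exprn_gt0 ?ltr0n 1?ltnW // -ltr_pdivrMl // mulrC.
apply: (lt_le_trans (truncnS_gt _)); apply: (le_trans (y := n%:R)).
  by rewrite ler_nat.
by rewrite -natrX ler_nat ltnW // ltn_expl.
Qed.

Lemma halving_le (R : realType) (r : nat -> R) :
  (forall k, 2 * r k.+1 <= r k) -> forall k, r k <= r 0%N / 2 ^+ k.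
Proof.
move=> hr; elim=> [|k IH]; first by rewrite expr0 divr1.
rewrite exprS invfM mulrCA ler_pdivlMl //.
exact: le_trans (hr k) IH.
Qed.

Lemma sqr_exp2 (R : pzSemiRingType) k : (2 ^+ k) ^+ 2 = 4 ^+ k :> R.
Proof. by rewrite -exprM mulnC exprM -natrX. Qed.

Lemma geometric4_halving (R : realType) (c : R) k : 0 <= c ->
  2 * (c / 4 ^+ k.+1) <= c / 4 ^+ k.
Proof.
move=> c0; have ck : 0 <= c / 4 ^+ k by rewrite divr_ge0.
have -> : 2 * (c / 4 ^+ k.+1) = c / 4 ^+ k / 2 by rewrite exprS; field; rewrite expf_neq0.
lra.
Qed.

Lemma ler_sqrt_of_sqr (R : realType) (x y : R) : 0 <= x -> x ^+ 2 <= y -> x <= Num.sqrt y.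
Proof. by move=> x0 xy; rewrite -(ger0_norm x0) -sqrtr_sqr ler_wsqrtr. Qed.

Lemma sqrtr_le_add_of_young (R : realType) (a b c : R) : 0 <= a -> 0 <= b ->
  (forall t, 0 < t -> c <= (1 + t) * a + (1 + t^-1) * b) ->
  Num.sqrt c <= Num.sqrt a + Num.sqrt b.
Proof.
move=> a0 b0 hc; set A := Num.sqrt a; set B := Num.sqrt b.
have A0 : 0 <= A by exact: sqrtr_ge0.
have B0 : 0 <= B by exact: sqrtr_ge0.
apply/ler_addgt0Pr => e e0; set d := e / 2.
have d0 : 0 < d by rewrite divr_gt0.
(* Young's inequality with the parameter t = (B + d) / (A + d), almost optimal *)
have hAd : 0 < A + d by lra.
have hBd : 0 < B + d by lra.
have sqA : A ^+ 2 / (A + d) <= A by rewrite ler_pdivrMr //; nra.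
have sqB : B ^+ 2 / (B + d) <= B by rewrite ler_pdivrMr //; nra.
have := hc _ (divr_gt0 hBd hAd).
rewrite -(sqr_sqrtr a0) -(sqr_sqrtr b0) -/A -/B invf_div.
have -> : (1 + (B + d) / (A + d)) * A ^+ 2 + (1 + (A + d) / (B + d)) * B ^+ 2
    = (A + B + 2 * d) * (A ^+ 2 / (A + d) + B ^+ 2 / (B + d)).
  by field; rewrite !gt_eqF.
move=> /le_trans/(_ (ler_wpM2l _ (lerD sqA sqB))) hle.
have {hle} hle : c <= (A + B + e) ^+ 2.
  by apply: le_trans (hle _) _; rewrite /d; nra.
have ABe : 0 <= A + B + e by lra.
by rewrite -[X in _ <= X](ger0_norm ABe) -sqrtr_sqr ler_wsqrtr.
Qed.

Lemma cvg_geometric4 (R : realType) (b : R) : (fun n => (b / 4 ^+ n)%:E) @ \oo --> 0%E.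
Proof.
apply: cvg_EFin; first exact: nearW.
have -> : fine \o (fun n => (b / 4 ^+ n)%:E) = geometric b (4^-1 : R).
  by apply/funext => n /=; rewrite exprVn.
by apply: cvg_geometric; rewrite ger0_norm ?invr_ge0 // invf_lt1 //; lra.
Qed.

Section Seminorm.
Variables (R : realType) (X : lmodType R[i]).

Definition seminorm (nu : X -> R) :=
  (forall x y, nu (x + y) <= nu x + nu y) /\
  (forall (r : R) x, nu ((r%:C)%C *: x) = `|r| * nu x).

Definition converges_in (nu : X -> R) (u : nat -> X) (l : X) :=
  forall e, 0 < e -> exists N : nat, forall n, (N <= n)%N -> nu (u n - l) < e.

Definition complete_for (nu : X -> R) :=
  forall (u : nat -> X) (c : R), (forall k, nu (u k.+1 - u k) <= c / 4 ^+ k) ->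
  exists l, converges_in nu u l.

Lemma real_scalerKV (r : R) (x : X) : r != 0 ->
  ((r^-1)%:C)%C *: ((r%:C)%C *: x) = x.
Proof. by move=> r0; rewrite scalerA -rmorphM mulVf // rmorph1 scale1r. Qed.

Variable nu : X -> R.
Hypothesis hnu : seminorm nu.

Lemma seminormD x y : nu (x + y) <= nu x + nu y.
Proof. exact: hnu.1. Qed.

Lemma seminormZ (r : R) x : nu ((r%:C)%C *: x) = `|r| * nu x.
Proof. exact: hnu.2. Qed.

Lemma seminorm0 : nu 0 = 0.
Proof. by rewrite -(scaler0 _ 0%:C%C) seminormZ normr0 mul0r. Qed.

Lemma seminormN x : nu (- x) = nu x.
Proof.
by rewrite -scaleN1r -(rmorphN1 (real_complex R)) seminormZ normrN normr1 mul1r.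
Qed.

Lemma seminorm_ge0 x : 0 <= nu x.
Proof.
have := seminormD x (- x); rewrite subrr seminorm0 seminormN; lra.
Qed.

Lemma seminormB_sym x y : nu (x - y) = nu (y - x).
Proof. by rewrite -seminormN opprB. Qed.

Lemma seminormB_le x y z : nu (x - z) <= nu (x - y) + nu (y - z).
Proof. by rewrite -[x - z](subrKA y) seminormD. Qed.

Lemma seminorm_telescope (u : nat -> X) (r : nat -> R) :
  (forall k, nu (u k.+1 - u k) <= r k) -> (forall k, 2 * r k.+1 <= r k) ->
  forall k n, (k <= n)%N -> nu (u n - u k) <= 2 * r k.
Proof.
move=> hu hr k n /subnKC <-; set m := (n - k)%N.
suff : nu (u (k + m)%N - u k) <= 2 * r k - 2 * r (k + m)%N.
  by have := le_trans (seminorm_ge0 _) (hu (k + m)%N); lra.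
elim: m => [|m IH]; first by rewrite addn0 subrr seminorm0 subrr.
rewrite addnS; apply: le_trans (seminormB_le _ (u (k + m)%N) _) _.
by have := hu (k + m)%N; have := hr (k + m)%N; lra.
Qed.

Lemma converges_in_telescope (u : nat -> X) (r : nat -> R) l :
  (forall k, nu (u k.+1 - u k) <= r k) -> (forall k, 2 * r k.+1 <= r k) ->
  converges_in nu u l -> forall k, nu (l - u k) <= 2 * r k.
Proof.
move=> hu hr ul k; apply/ler_addgt0Pr => e /ul[N hN].
apply: le_trans (seminormB_le _ (u (maxn N k)) _) _.
rewrite seminormB_sym addrC lerD //; last exact/ltW/hN/leq_maxl.
exact: seminorm_telescope hu hr _ _ (leq_maxr _ _).
Qed.

Lemma converges_in_geometric (b : nat) (u : nat -> X) l (c : R) : (1 < b)%N ->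
  (forall k, nu (u k - l) <= c / b%:R ^+ k) -> converges_in nu u l.
Proof.
move=> b1 hu e /(geometric_lt c b1)[N hN]; exists N => n Nn.
exact: le_lt_trans (hu n) (hN n Nn).
Qed.

End Seminorm.

Section CompleteSeminorms.
Variables (R : realType) (X : lmodType R[i]) (N : X -> R).
Hypotheses (hN : seminorm N) (N_complete : complete_for N).

Lemma baire_seminorm (B : nat -> set X) : (forall x, exists n, B n x) ->
  exists n y0 (r0 : R), 0 < r0 /\
    forall z, N (z - y0) < r0 -> forall e, 0 < e -> exists2 x, B n x & N (z - x) < e.
Proof.
move=> cover; apply: contrapT => hneg.
have step (p : nat * (X * R)) : exists yr : X * R, 0 < p.2.2 ->
    [/\ N (yr.1 - p.2.1) < p.2.2, 0 < yr.2, 4 * yr.2 <= p.2.2 &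
        forall x, B p.1 x -> 4 * yr.2 <= N (yr.1 - x)].
  case: p => n [y r] /=; have [r0|_] := ltP 0 r; last by exists (y, r).
  have [z [zy [e e0 he]]] : exists z, N (z - y) < r /\
      exists2 e, 0 < e & forall x, B n x -> e <= N (z - x).
    apply: contrapT => hno; apply: hneg; exists n, y, r; split => // z zy e e0.
    apply: contrapT => hx; apply: hno; exists z; split => //; exists e => // x Bx.
    by rewrite leNgt; apply/negP => lt_ze; apply: hx; exists x.
  exists (z, Num.min r e / 4) => _ /=; split => //.
  - by rewrite divr_gt0 // lt_min r0.
  - by rewrite mulrC divfK // ge_min lexx.
  - by move=> x /he; rewrite mulrC divfK // ge_min => ->; rewrite orbT.
(* points y_k and radii r_k with N (y_(k+1) - y_k) < r_k, r_(k+1) <= r_k / 4 and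
   y_(k+1) at distance >= 4 r_(k+1) from B k; the limit of y_k lies in no B n *)
have [next nextP] := choice step.
pose yr := fix yr k := if k is k'.+1 then next (k', yr k') else (0 : X, 1 : R).
have r_gt0 k : 0 < (yr k).2.
  by elim: k => [|k IH] //=; have [] := nextP (k, yr k) IH.
have {}nextP k := nextP (k, yr k) (r_gt0 k).
have r_dec k : 2 * (yr k.+1).2 <= (yr k).2.
  by have [_ _ + _] := nextP k; have := r_gt0 k.+1; lra.
have y_step k : N ((yr k.+1).1 - (yr k).1) <= (yr k).2.
  by have [/ltW] := nextP k.
have r_le k : (yr k).2 <= 1 / 4 ^+ k.
  elim: k => [|k IH]; first by rewrite expr0 divr1.
  have [_ _ + _] := nextP k; rewrite exprS invfM mulrCA ler_pdivlMl //; lra.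
have [ys ys_lim] := N_complete (fun k => le_trans (y_step k) (r_le k)).
have [n Bn] := cover ys.
have [_ _ _ /(_ _ Bn)] := nextP n.
have := converges_in_telescope hN y_step r_dec ys_lim n.+1.
by rewrite seminormB_sym //; have := r_gt0 n.+1; lra.
Qed.

Variables (nu : X -> R) (C : R).
Hypotheses (hnu : seminorm nu) (nu_complete : complete_for nu).
Hypotheses (N_eq0 : forall x, N x = 0 -> x = 0) (N_le : forall x, N x <= C * nu x).

Lemma seminorm_approx : exists2 M, 0 <= M &
  forall z, exists x, nu x <= M * N z /\ N (z - x) <= N z / 4.
Proof.
have cover x : exists n, nu x <= n%:R by exists (Num.trunc (nu x)).+1; exact/ltW/truncnS_gt.
have [n [y0 [r0 [r0_gt0 dense]]]] := baire_seminorm cover.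
exists (4 * n%:R / r0); first by rewrite divr_ge0 // ltW.
move=> z; have [Nz0|Nz_neq0] := eqVneq (N z) 0.
  by exists 0; split; rewrite ?subr0 Nz0 ?mulr0 ?mul0r ?seminorm0.
have Nz_gt0 : 0 < N z by rewrite lt_def Nz_neq0 seminorm_ge0.
(* rescale z into the ball where the nu-bounded points are N-dense *)
pose lam := r0 / (2 * N z).
have lam_gt0 : 0 < lam by rewrite divr_gt0 // mulr_gt0.
have r16 : 0 < r0 / 16 by rewrite divr_gt0.
have [x1 x1_le x1_near] : exists2 x, nu x <= n%:R & N (y0 + (lam%:C)%C *: z - x) < r0 / 16.
  apply: dense r16; rewrite addrAC subrr add0r seminormZ // ger0_norm ?(ltW lam_gt0) //.
  have -> : lam * N z = r0 / 2 by rewrite /lam; field; rewrite gt_eqF.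
  lra.
have [x2 x2_le x2_near] : exists2 x, nu x <= n%:R & N (y0 - x) < r0 / 16.
  by apply: dense r16; rewrite subrr seminorm0.
exists ((lam^-1)%:C%C *: (x1 - x2)); split.
  rewrite seminormZ // ger0_norm ?invr_ge0 ?(ltW lam_gt0) // /lam invf_div.
  have := seminormD hnu x1 (- x2); rewrite seminormN //.
  have -> : 4 * n%:R / r0 * N z = 2 * N z / r0 * (2 * n%:R) by field; rewrite gt_eqF.
  move=> le12; apply: ler_wpM2l; first by rewrite divr_ge0 ?mulr_ge0 ?ltW.
  lra.
rewrite -{1}(real_scalerKV z (lt0r_neq0 lam_gt0)) -scalerBr seminormZ //.
rewrite ger0_norm ?invr_ge0 ?(ltW lam_gt0) // /lam invf_div.
have -> : (lam%:C)%C *: z - (x1 - x2) = (y0 + (lam%:C)%C *: z - x1) - (y0 - x2).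
  by rewrite [RHS]addrC !opprB -!addrA addKr addrCA.
have := seminormD hN (y0 + (lam%:C)%C *: z - x1) (- (y0 - x2)); rewrite seminormN //.
have -> : N z / 4 = 2 * N z / r0 * (r0 / 8) by field; rewrite gt_eqF.
move=> le12; apply: ler_wpM2l; first by rewrite divr_ge0 ?mulr_ge0 ?ltW.
lra.
Qed.

Lemma converges_in_comparable_unique (u : nat -> X) z s :
  converges_in N u z -> converges_in nu u s -> z = s.
Proof.
move=> uz us; apply/eqP; rewrite -subr_eq0; apply/eqP/N_eq0/le_anti.
rewrite seminorm_ge0 // andbT; apply/ler_addgt0Pr => e e_gt0; rewrite add0r.
have e2_gt0 : 0 < e / 2 by rewrite divr_gt0.
have eC_gt0 : 0 < e / 2 / (`|C| + 1) by rewrite divr_gt0 // ltr_wpDl.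
have [K1 uz_small] := uz _ e2_gt0.
have [K2 us_small] := us _ eC_gt0.
pose K := maxn K1 K2.
apply: le_trans (seminormB_le hN _ (u K) _) _; rewrite seminormB_sym //.
have {}uz_small := uz_small K (leq_maxl _ _).
have {}us_small : N (u K - s) <= e / 2.
  have := us_small K (leq_maxr _ _); rewrite ltr_pdivlMr ?ltr_wpDl // => lt_e.
  apply: le_trans (N_le _) _; apply: le_trans (ler_wpM2r (seminorm_ge0 hnu _) (ler_norm C)) _.
  by have := seminorm_ge0 hnu (u K - s); have := normr_ge0 C; nra.
lra.
Qed.

Theorem complete_seminorms_equiv : exists M, forall x, nu x <= M * N x.
Proof.
have [M M_ge0 approx] := seminorm_approx.
exists (2 * M) => z; have [step stepP] := choice approx.
(* successive approximations: z = sum of the steps, each N-smaller by 1/4 *)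
pose rem k := iter k (fun v => v - step v) z.
pose partial k := z - rem k.
have rem_le k : N (rem k) <= N z / 4 ^+ k.
  elim: k => [|k IH]; first by rewrite expr0 divr1.
  rewrite /rem iterS -/(rem k); apply: le_trans (proj2 (stepP _)) _.
  by rewrite exprS invfM mulrCA ler_pdivlMl // mulrCA divff ?mulr1.
have partial_step k : nu (partial k.+1 - partial k) <= M * N z / 4 ^+ k.
  rewrite /partial /rem iterS -/(rem k) [- (z - _)]opprD addrACA subrr add0r opprB opprK subrK.
  by apply: le_trans (proj1 (stepP _)) _; rewrite -mulrA ler_wpM2l.
have [s partial_lim] := nu_complete partial_step.
have halving k := geometric4_halving k (mulr_ge0 M_ge0 (seminorm_ge0 hN z)).
have z_eq_s : z = s.
  apply: converges_in_comparable_unique partial_lim.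
  apply: (converges_in_geometric (b := 4) (c := N z)) => // k.
  by rewrite seminormB_sym // /partial opprB addrCA subrr addr0.
have := converges_in_telescope hnu partial_step halving partial_lim 0.
by rewrite /partial /= subrr subr0 -z_eq_s expr0 divr1 mulrA.
Qed.

End CompleteSeminorms.

Section PreHilbertTheory.
Variables (R : realType) (V : preHilbertType R).
Implicit Types x y z : V.

Definition rinner x y : R := complex.Re (cinner x y).

Lemma rinnerC x y : rinner x y = rinner y x.
Proof. by rewrite /rinner cinnerC; case: (cinner y x). Qed.

Lemma rinnerDl x y z : rinner (x + y) z = rinner x z + rinner y z.
Proof.
rewrite /rinner; have := cinnerDl 1 x y z; rewrite scale1r mul1r => ->.
by case: (cinner x z); case: (cinner y z).
Qed.

Lemma rinnerZl (r : R) x z : rinner ((r%:C)%C *: x) z = r * rinner x z.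
Proof.
have cinner0l : cinner 0 z = 0.
  have := cinnerDl 1 0 0 z; rewrite scale1r addr0 mul1r => h.
  by apply: (addrI (cinner 0 z)); rewrite addr0 -h.
rewrite /rinner -[_ *: x]addr0 cinnerDl cinner0l addr0.
by case: (cinner x z) => a b /=; rewrite !mul0r subr0.
Qed.

Lemma rinnerNl x z : rinner (- x) z = - rinner x z.
Proof.
by rewrite -scaleN1r -(rmorphN1 (real_complex R)) rinnerZl mulN1r.
Qed.

Lemma rinnerBl x y z : rinner (x - y) z = rinner x z - rinner y z.
Proof. by rewrite rinnerDl rinnerNl. Qed.

Lemma rinnerBr x y z : rinner z (x - y) = rinner z x - rinner z y.
Proof. by rewrite rinnerC rinnerBl rinnerC [rinner y z]rinnerC. Qed.

Lemma rinnerZr (r : R) x z : rinner z ((r%:C)%C *: x) = r * rinner z x.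
Proof. by rewrite rinnerC rinnerZl rinnerC. Qed.

Lemma rinnerDr x y z : rinner z (x + y) = rinner z x + rinner z y.
Proof. by rewrite rinnerC rinnerDl rinnerC [rinner y z]rinnerC. Qed.

Lemma rinner_ge0 x : 0 <= rinner x x.
Proof. by have := cinner_ge0 x; rewrite lecE => /andP[]. Qed.

Lemma hnormE x : hnorm x = Num.sqrt (rinner x x).
Proof. by []. Qed.

Lemma hnorm_ge0 x : 0 <= hnorm x.
Proof. exact: sqrtr_ge0. Qed.

Lemma hnorm_sqr x : hnorm x ^+ 2 = rinner x x.
Proof. by rewrite sqr_sqrtr // rinner_ge0. Qed.

Lemma hnorm_eq0 x : hnorm x = 0 -> x = 0.
Proof.
move=> hx; apply: cinner_eq0; have := cinner_ge0 x; rewrite lecE => /andP[/eqP im0 _].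
have : rinner x x = 0 by rewrite -hnorm_sqr hx expr0n.
by move: im0; rewrite /rinner; case: (cinner x x) => a b /= -> ->.
Qed.

Lemma hnorm_gt0 x : x != 0 -> 0 < hnorm x.
Proof. by move=> x0; rewrite lt_def hnorm_ge0 andbT; apply: contraNneq x0 => /hnorm_eq0 ->. Qed.

Lemma hnormZ (r : R) x : hnorm ((r%:C)%C *: x) = `|r| * hnorm x.
Proof.
by rewrite !hnormE rinnerZl rinnerZr mulrA -expr2 sqrtrM ?sqr_ge0 // sqrtr_sqr.
Qed.

Lemma hnormD_sqr_le x y (t : R) : 0 < t ->
  hnorm (x + y) ^+ 2 <= (1 + t) * hnorm x ^+ 2 + (1 + t^-1) * hnorm y ^+ 2.
Proof.
move=> t0; rewrite !hnorm_sqr rinnerDl !rinnerDr [rinner y x]rinnerC.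
have := rinner_ge0 ((t%:C)%C *: x - y).
rewrite rinnerBl !rinnerBr !rinnerZl !rinnerZr [rinner y x]rinnerC => h.
suff : 2 * rinner x y <= t * rinner x x + t^-1 * rinner y y by lra.
rewrite -(ler_pM2l t0) mulrDr [t * (t^-1 * _)]mulrA mulfV ?gt_eqF // mul1r; lra.
Qed.

Lemma hnorm_seminorm : seminorm (@hnorm R V).
Proof.
split; last exact: hnormZ.
move=> x y; rewrite !hnormE; apply: sqrtr_le_add_of_young; rewrite ?rinner_ge0 // => t t0.
by rewrite -!hnorm_sqr hnormD_sqr_le.
Qed.

Lemma hnorm0 : hnorm (0 : V) = 0.
Proof. exact: seminorm0 hnorm_seminorm. Qed.

End PreHilbertTheory.

Section HilbertTheory.
Variables (R : realType) (V : hilbertType R).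

Lemma hilbert_limit_halving (u : nat -> V) (r : nat -> R) :
  (forall k, hnorm (u k.+1 - u k) <= r k) -> (forall k, 2 * r k.+1 <= r k) ->
  exists2 l, converges_in (@hnorm R V) u l & forall k, hnorm (l - u k) <= 2 * r k.
Proof.
move=> hu hr; have tele := seminorm_telescope (hnorm_seminorm V) hu hr.
have [l ul] : exists l, hconverges u l.
  apply: hcomplete => e /(geometric_lt (4 * r 0%N) (ltnSn 1))[N hN].
  exists N => m n Nm Nn; apply: le_lt_trans (seminormB_le (hnorm_seminorm V) _ (u N) _) _.
  rewrite [hnorm (u N - _)](seminormB_sym (hnorm_seminorm V)).
  have := hN N (leqnn N); have := halving_le hr N.
  by have := tele _ _ Nm; have := tele _ _ Nn; lra.
exists l; first exact: ul.
exact: (@converges_in_telescope _ _ _ (hnorm_seminorm V) _ _ l hu hr ul).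
Qed.

Lemma hilbert_complete : complete_for (@hnorm R V).
Proof.
move=> u c hu; have c_ge0 : 0 <= c.
  by have := le_trans (hnorm_ge0 _) (hu 0%N); rewrite expr0 divr1.
by have [l ul _] := hilbert_limit_halving hu (fun k => geometric4_halving k c_ge0); exists l.
Qed.

End HilbertTheory.

Section ClosedSubspace.
Variables (R : realType) (V : preHilbertType R) (S : set V).
Hypothesis hS : closed_subspace S.

Lemma closed_subspace0 : S 0.
Proof. exact: hS.1. Qed.

Lemma closed_subspaceD x y : S x -> S y -> S (x + y).
Proof. by move=> Sx Sy; have := hS.2.1 1 x y Sx Sy; rewrite scale1r. Qed.

Lemma closed_subspaceN x : S x -> S (- x).
Proof. by move=> Sx; have := hS.2.1 (-1) x 0 Sx closed_subspace0; rewrite addr0 scaleN1r. Qed.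

End ClosedSubspace.

Section MeasurableSections.
Variables (R : realType) (K : hilbertType R).
Variables (d : measure_display) (Om : measurableType d) (Ksub : Om -> set K).
Hypothesis hKsub : forall w, closed_subspace (Ksub w).
Hypothesis horth : forall w w' : Om, w <> w' -> forall x y : K,
  Ksub w x -> Ksub w' y -> cinner x y = 0.

Lemma hopen_ball (c : K) (r : R) : hopen [set y | hnorm (y - c) < r].
Proof.
move=> x /= xc; exists (r - hnorm (x - c)); first by rewrite subr_gt0.
by move=> y yx; apply: le_lt_trans (seminormB_le (hnorm_seminorm K) _ x _) _; lra.
Qed.

Lemma hopen_neq0 : hopen [set y : K | y != 0].
Proof.
move=> x /= x0; exists (hnorm x); first exact: hnorm_gt0.
by move=> y; apply: contraTneq => ->; rewrite sub0r (seminormN (hnorm_seminorm K)) ltxx.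
Qed.

Lemma hnormB_sqr_orth w w' (x y : K) : w <> w' -> Ksub w x -> Ksub w' y ->
  hnorm (x - y) ^+ 2 = hnorm x ^+ 2 + hnorm y ^+ 2.
Proof.
move=> ww' Kx Ky; have xy : rinner x y = 0 by rewrite /rinner (horth ww' Kx Ky).
by rewrite !hnorm_sqr rinnerBl !rinnerBr xy [rinner y x]rinnerC xy; lra.
Qed.

Definition measurable_section (G : Om -> K) :=
  strongly_measurable G /\ forall w, Ksub w (G w).

(* By orthogonality of the fibres, the open ball of radius [hnorm (G w)] around
   [G w] contains no [G w'] with [w' <> w], so a union of such balls pulls back
   under G to exactly the chosen part of the support. *)
Lemma measurable_support_subset (G : Om -> K) (A : set Om) :
  measurable_section G -> A `<=` [set w | G w != 0] -> measurable A.
Proof.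
move=> [mG KG] A_supp.
pose U := [set y | exists2 w, A w & hnorm (y - G w) < hnorm (G w)].
have U_open : hopen U.
  move=> y [w Aw yw]; have [e e0 he] := hopen_ball yw.
  by exists e => // z /he; exists w.
have -> : A = G @^-1` U `&` G @^-1` [set y | y != 0].
  apply/seteqP; split => w.
    move=> Aw; split => //; last exact: A_supp.
    by exists w => //; rewrite subrr hnorm0 hnorm_gt0 ?A_supp.
  move=> [[w' Aw' ww'] Gw0]; have [->//|neq] := pselect (w = w').
  exfalso; move: ww'; have := hnormB_sqr_orth neq (KG w) (KG w').
  by have := hnorm_gt0 Gw0; have := hnorm_ge0 (G w - G w'); nra.
by apply: measurableI; apply: mG; [exact: U_open | exact: hopen_neq0].
Qed.

Section CommonZeros.
Variable Gs : nat -> Om -> K.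
Hypothesis Gs_sec : forall n, measurable_section (Gs n).

Definition const_on_zeros (T : Type) (phi : Om -> T) :=
  forall w w', (forall n, Gs n w = 0) -> (forall n, Gs n w' = 0) -> phi w = phi w'.

Lemma measurable_preimage_const_on_zeros (T : Type) (phi : Om -> T) (B : set T) :
  const_on_zeros phi -> measurable (phi @^-1` B).
Proof.
move=> phi_cst; pose Z := \bigcup_n [set w | Gs n w != 0].
have -> : phi @^-1` B = (\bigcup_n (phi @^-1` B `&` [set w | Gs n w != 0])) `|`
                        (phi @^-1` B `&` ~` Z).
  apply/seteqP; split => [w Bw|w [[n _ []]|[]]] //.
  by have [[n _ Gnw]|nZw] := pselect (Z w); [left; exists n | right].
apply: measurableU.
  by apply: bigcupT_measurable => n; apply: measurable_support_subset (Gs_sec n) _ => w [].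
have [[w [Bw nZw]]|none] := pselect (exists w, (phi @^-1` B) w /\ ~ Z w).
  have zero w' : ~ Z w' -> forall n, Gs n w' = 0.
    by move=> nZ n; apply/eqP; apply: contra_notT nZ => Gnw; exists n.
  have -> : phi @^-1` B `&` ~` Z = ~` Z.
    apply/seteqP; split => [w' []//|w' nZw']; split => //.
    by move: Bw; rewrite /preimage /= (phi_cst w w') //; exact: zero.
  apply: measurableC; apply: bigcupT_measurable => n.
  exact: (Gs_sec n).1 _ hopen_neq0.
have -> : phi @^-1` B `&` ~` Z = set0.
  by apply/seteqP; split => w // [Bw nZw]; apply: none; exists w.
exact: measurable0.
Qed.

Lemma measurable_fun_const_on_zeros (phi : Om -> \bar R) :
  const_on_zeros phi -> measurable_fun setT phi.
Proof. by move=> phi_cst _ B _; rewrite setTI; exact: measurable_preimage_const_on_zeros. Qed.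

Lemma strongly_measurable_const_on_zeros (F : Om -> K) :
  const_on_zeros F -> strongly_measurable F.
Proof. by move=> F_cst U _; exact: measurable_preimage_const_on_zeros. Qed.

End CommonZeros.

Lemma measurable_sectionD (G1 G2 : Om -> K) :
  measurable_section G1 -> measurable_section G2 ->
  measurable_section (fun w => G1 w + G2 w).
Proof.
move=> G1_sec G2_sec; split; last first.
  by move=> w; apply: closed_subspaceD; [|exact: G1_sec.2|exact: G2_sec.2].
apply: (@strongly_measurable_const_on_zeros (fun n => if n is 0%N then G1 else G2)).
  by case.
move=> w w' zw zw'.
by rewrite (zw 0%N : G1 w = 0) (zw 1%N : G2 w = 0) (zw' 0%N : G1 w' = 0) (zw' 1%N : G2 w' = 0).
Qed.

Lemma measurable_sectionN (G : Om -> K) :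
  measurable_section G -> measurable_section (fun w => - G w).
Proof.
move=> G_sec; split; last by move=> w; apply: closed_subspaceN; [|exact: G_sec.2].
apply: (@strongly_measurable_const_on_zeros (fun=> G)) => // w w' zw zw'.
by rewrite (zw 0%N) (zw' 0%N).
Qed.

End MeasurableSections.

Section SquareIntegral.
Variables (R : realType) (K : hilbertType R).
Variables (d : measure_display) (Om : measurableType d).
Variables (mu : {measure set Om -> \bar R}) (Ksub : Om -> set K).
Hypothesis horth : forall w w' : Om, w <> w' -> forall x y : K,
  Ksub w x -> Ksub w' y -> cinner x y = 0.
Implicit Types G : Om -> K.

Lemma sq_int_ge0 G : (0 <= sq_int mu G)%E.
Proof. by apply: integral_ge0 => w _; rewrite lee_fin sqr_ge0. Qed.

Lemma measurable_hnorm_sqr G : measurable_section Ksub G ->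
  measurable_fun setT (fun w => (hnorm (G w) ^+ 2)%:E).
Proof.
move=> G_sec; apply: (measurable_fun_const_on_zeros horth (Gs := fun=> G)) => // w w' zw zw'.
by rewrite (zw 0%N) (zw' 0%N).
Qed.

Lemma sq_int_le_comb G G1 G2 (a b : R) : measurable_section Ksub G ->
  measurable_section Ksub G1 -> measurable_section Ksub G2 -> 0 <= a -> 0 <= b ->
  (forall w, hnorm (G w) ^+ 2 <= a * hnorm (G1 w) ^+ 2 + b * hnorm (G2 w) ^+ 2) ->
  (sq_int mu G <= a%:E * sq_int mu G1 + b%:E * sq_int mu G2)%E.
Proof.
move=> G_sec G1_sec G2_sec a0 b0 hG.
have sqr_hnorm_ge0 G' w : (0 <= (hnorm (G' w) ^+ 2)%:E)%E by rewrite lee_fin sqr_ge0.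
rewrite /sq_int -!ge0_integralZl_EFin //; try exact: measurable_hnorm_sqr.
rewrite -ge0_integralD //; try exact/measurable_funeM/measurable_hnorm_sqr;
  try by move=> w _; rewrite mule_ge0 // lee_fin.
apply: ge0_le_integral => //.
- exact: measurable_hnorm_sqr.
- by apply: emeasurable_funD; exact/measurable_funeM/measurable_hnorm_sqr.
- by move=> w _; rewrite -!EFinM -EFinD lee_fin.
Qed.

Lemma sq_int_scale (r : R) G : measurable_section Ksub G ->
  sq_int mu (fun w => (r%:C)%C *: G w) = ((r ^+ 2)%:E * sq_int mu G)%E.
Proof.
move=> G_sec; rewrite /sq_int -ge0_integralZl_EFin ?sqr_ge0 //; last first.
- exact: measurable_hnorm_sqr.
- by move=> w _; rewrite lee_fin sqr_ge0.
by apply: eq_integral => w _; rewrite hnormZ exprMn real_normK ?num_real.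
Qed.

Lemma sq_int_ae_eq G1 G2 : measurable_section Ksub G1 -> measurable_section Ksub G2 ->
  {ae mu, forall w, G1 w = G2 w} -> sq_int mu G1 = sq_int mu G2.
Proof.
move=> G1_sec G2_sec G12; apply: ae_eq_integral => //; try exact: measurable_hnorm_sqr.
by apply: filterS G12 => w /= ->.
Qed.

Lemma sq_int_eq0 G : measurable_section Ksub G ->
  sq_int mu G = 0%E <-> {ae mu, forall w, G w = 0}.
Proof.
move=> G_sec; have mG := measurable_hnorm_sqr G_sec; split => [G0|G0]; last first.
  rewrite /sq_int (ae_eq_integral (cst 0%E)) ?integral0 //.
  by apply: filterS G0 => w /= -> _; rewrite hnorm0 expr0n.
have : (\int[mu]_w `|(hnorm (G w) ^+ 2)%:E| = 0)%E.
  by rewrite -G0; apply: eq_integral => w _; rewrite gee0_abs // lee_fin sqr_ge0.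
move/(ae_eq_integral_abs mu measurableT mG); apply: filterS => w /(_ I) [].
by move/eqP; rewrite sqrf_eq0 => /eqP/hnorm_eq0.
Qed.

End SquareIntegral.

Section RieszFischer.
Variables (R : realType) (K : hilbertType R).
Variables (d : measure_display) (Om : measurableType d).
Variables (mu : {measure set Om -> \bar R}) (Ksub : Om -> set K).
Hypothesis hKsub : forall w, closed_subspace (Ksub w).
Hypothesis horth : forall w w' : Om, w <> w' -> forall x y : K,
  Ksub w x -> Ksub w' y -> cinner x y = 0.
Variables (G : nat -> Om -> K) (c : R).
Hypothesis G_sec : forall k, measurable_section Ksub (G k).
Hypothesis G0_fin : (sq_int mu (G 0%N) < +oo)%E.
Hypothesis G_step : forall k,
  (sq_int mu (fun w => (G k.+1 w - G k w)%R) <= ((c / 4 ^+ k) ^+ 2)%:E)%E.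

Let step_sec k : measurable_section Ksub (fun w => G k.+1 w - G k w).
Proof. by apply: measurable_sectionD => //; exact: measurable_sectionN. Qed.

(* The k-th increment is O(4^-k) in L^2, so weighting it by 4^k keeps the
   integral summable while making the pointwise increments O(2^-k) wherever the
   sum is finite. *)
Definition weighted_increments w : \bar R :=
  (\sum_(k <oo) (4 ^+ k)%:E * (hnorm (G k.+1 w - G k w)%R ^+ 2)%:E)%E.
Local Notation h := weighted_increments.

Let term_ge0 w k : (0 <= (4 ^+ k)%:E * (hnorm (G k.+1 w - G k w)%R ^+ 2)%:E)%E.
Proof. by apply: mule_ge0; rewrite lee_fin ?sqr_ge0 // exprn_ge0 ?ler0n. Qed.

Lemma weighted_increments_ge0 w : (0 <= h w)%E.
Proof. by apply: nneseries_ge0 => k _ _; exact: term_ge0. Qed.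

Lemma measurable_weighted_increments : measurable_fun setT h.
Proof.
apply: (measurable_fun_const_on_zeros horth G_sec) => w w' zw zw'.
by rewrite /h !eseries0 // => k _ _; rewrite ?zw ?zw' subrr hnorm0 expr0n mule0.
Qed.

Lemma weighted_increments_integral : (\int[mu]_w h w <= (2 * c ^+ 2)%:E)%E.
Proof.
rewrite integral_nneseries //; last first.
  by move=> k; apply/measurable_funeM/(measurable_hnorm_sqr horth (step_sec k)).
have <- : (\sum_(k <oo) ((2 * c ^+ 2) / (2 ^ (k + 1))%:R)%:E = (2 * c ^+ 2)%:E)%E.
  by have := @cvg_geometric_eseries_half R (2 * c ^+ 2) 0; rewrite expr0 divr1 => /cvg_lim <-.
apply: lee_nneseries => [k _ _|k _].
  by apply: integral_ge0 => w _.
rewrite ge0_integralZl_EFin ?exprn_ge0 //; last 2 first.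
- by move=> w _; rewrite lee_fin sqr_ge0.
- exact: (measurable_hnorm_sqr horth (step_sec k)).
apply: le_trans (lee_wpmul2l _ (G_step k)) _; first by rewrite lee_fin exprn_ge0.
rewrite -EFinM lee_fin.
have -> : 4 ^+ k * (c / 4 ^+ k) ^+ 2 = c ^+ 2 / 4 ^+ k by field; rewrite expf_neq0.
have -> : 2 * c ^+ 2 / (2 ^ (k + 1))%:R = c ^+ 2 / 2 ^+ k.
  by rewrite natrX addn1 (exprS (2 : R) k); field; rewrite expf_neq0.
apply: ler_wpM2l; first exact: sqr_ge0.
rewrite lef_pV2 ?posrE ?exprn_gt0 //.
have -> : 4 = 2 ^+ 2 :> R by rewrite expr2; lra.
by rewrite exprAC expr2 ler_peMr ?exprn_ge0 ?exprn_ege1 ?ler1n.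
Qed.

Lemma increment_le w k : (h w < +oo)%E ->
  hnorm (G k.+1 w - G k w) <= Num.sqrt (fine (h w)) / 2 ^+ k.
Proof.
move=> hw_fin; have hw : h w \is a fin_num by rewrite ge0_fin_numE // weighted_increments_ge0.
have term_le : 4 ^+ k * hnorm (G k.+1 w - G k w) ^+ 2 <= fine (h w).
  rewrite -lee_fin fineK // EFinM /h (nneseriesD1 (fun n _ => term_ge0 w n) (isT : xpredT k)).
  by rewrite leeDl //; apply: nneseries_ge0 => n _ _; exact: term_ge0.
rewrite ler_pdivlMr ?exprn_gt0 //; apply: ler_sqrt_of_sqr.
  by rewrite mulr_ge0 ?hnorm_ge0 ?exprn_ge0.
by rewrite exprMn sqr_exp2 mulrC.
Qed.

Definition fast_limit w (l : K) :=
  forall k, hnorm (l - G k w) <= 2 * (Num.sqrt (fine (h w)) / 2 ^+ k).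

(* Where [h w = +oo] (a null set) the value is irrelevant. *)
Definition limit_section w : K := xget 0 (fast_limit w).

Lemma limit_sectionP w : (h w < +oo)%E -> fast_limit w (limit_section w).
Proof.
move=> hw_fin; apply: xgetPex.
have halving k : 2 * (Num.sqrt (fine (h w)) / 2 ^+ k.+1) <= Num.sqrt (fine (h w)) / 2 ^+ k.
  by rewrite exprS invfM mulrCA mulVKf ?pnatr_eq0.
by have [l _ hl] := hilbert_limit_halving (fun k => increment_le k hw_fin) halving; exists l.
Qed.

Lemma limit_section_zeros w : (forall n, G n w = 0) -> limit_section w = 0.
Proof.
move=> zw; have hw0 : h w = 0%E.
  rewrite /h eseries0 // => k _ _.
  by rewrite !zw subrr hnorm0 expr0n mule0.
rewrite /limit_section; case: xgetP => // l -> /(_ 0%N).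
rewrite hw0 zw subr0 sqrtr0 mul0r mulr0 => l0.
by apply: hnorm_eq0; apply/le_anti; rewrite l0 hnorm_ge0.
Qed.

Lemma limit_section_fibre w : Ksub w (limit_section w).
Proof.
rewrite /limit_section; case: xgetP => [l -> bound|_]; last exact: closed_subspace0.
apply: (hKsub w).2.2 (G ^~ w) _ (fun k => (G_sec k).2 w) _.
apply: (converges_in_geometric (b := 2) (c := 2 * Num.sqrt (fine (h w)))) => // k.
by rewrite (seminormB_sym (hnorm_seminorm K)) -mulrA bound.
Qed.

Lemma measurable_section_limit : measurable_section Ksub limit_section.
Proof.
split; last exact: limit_section_fibre.
apply: (strongly_measurable_const_on_zeros horth G_sec) => w w' zw zw'.
by rewrite !limit_section_zeros.
Qed.

Lemma limit_section_sqr_le k w :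
  ((hnorm (limit_section w - G k w) ^+ 2)%:E <= (4 / 4 ^+ k)%:E * h w)%E.
Proof.
have [hw_inf|hw_fin] := eqVneq (h w) +oo%E.
  by rewrite hw_inf gt0_muley ?leey // lte_fin divr_gt0 // exprn_gt0.
have hw : h w \is a fin_num by rewrite ge0_fin_numE ?ltey ?weighted_increments_ge0.
rewrite -(fineK hw) -EFinM lee_fin.
have s2 : Num.sqrt (fine (h w)) ^+ 2 = fine (h w).
  by rewrite sqr_sqrtr // fine_ge0 // weighted_increments_ge0.
have hw_lt : (h w < +oo)%E by rewrite ltey.
have := limit_sectionP hw_lt k; have := hnorm_ge0 (limit_section w - G k w).
have -> : 4 / 4 ^+ k * fine (h w) = (2 * (Num.sqrt (fine (h w)) / 2 ^+ k)) ^+ 2.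
  by rewrite exprMn expr_div_n s2 sqr_exp2 (natrX _ 2 2) mulrA mulrAC.
by nra.
Qed.

Let limit_section_sub_sec k : measurable_section Ksub (fun w => limit_section w - G k w).
Proof.
by apply: measurable_sectionD => //; [exact: measurable_section_limit|exact: measurable_sectionN].
Qed.

Lemma sq_int_limit_section_sub k :
  (sq_int mu (fun w => (limit_section w - G k w)%R) <= (8 * c ^+ 2 / 4 ^+ k)%:E)%E.
Proof.
have c4_ge0 : 0 <= 4 / 4 ^+ k :> R by rewrite divr_ge0 ?exprn_ge0.
apply: (@le_trans _ _ (\int[mu]_w ((4 / 4 ^+ k)%:E * h w))%E).
  apply: ge0_le_integral => //.
  - by move=> w _; rewrite lee_fin sqr_ge0.
  - exact: (measurable_hnorm_sqr horth (limit_section_sub_sec k)).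
  - exact/measurable_funeM/measurable_weighted_increments.
  - by move=> w _; exact: limit_section_sqr_le.
rewrite ge0_integralZl_EFin //; last 2 first.
- by move=> w _; exact: weighted_increments_ge0.
- exact: measurable_weighted_increments.
apply: le_trans (lee_wpmul2l _ weighted_increments_integral) _; first by rewrite lee_fin.
rewrite -EFinM lee_fin (_ : 4 / 4 ^+ k * (2 * c ^+ 2) = 8 * c ^+ 2 / 4 ^+ k) //.
by field; rewrite expf_neq0.
Qed.

Lemma sq_int_limit_section_lty : (sq_int mu limit_section < +oo)%E.
Proof.
have le2 w : hnorm (limit_section w) ^+ 2 <=
    2 * hnorm (limit_section w - G 0%N w) ^+ 2 + 2 * hnorm (G 0%N w) ^+ 2.
  by have := hnormD_sqr_le (limit_section w - G 0%N w) (G 0%N w) ltr01; rewrite subrK invr1.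
apply: le_lt_trans (sq_int_le_comb mu horth measurable_section_limit
  (limit_section_sub_sec 0%N) (G_sec 0%N) (ler0n _ 2) (ler0n _ 2) le2) _.
apply: lte_add_pinfty; rewrite lte_mul_pinfty ?lee_fin //.
exact: le_lt_trans (sq_int_limit_section_sub 0%N) (ltry _).
Qed.

Theorem riesz_fischer_sections : exists2 F, in_hatK mu Ksub F &
  forall k, (sq_int mu (fun w => (F w - G k w)%R) <= (8 * c ^+ 2 / 4 ^+ k)%:E)%E.
Proof.
exists limit_section; last exact: sq_int_limit_section_sub.
split; first exact: measurable_section_limit.1.
by split; [exact: limit_section_fibre | exact: sq_int_limit_section_lty].
Qed.

End RieszFischer.

Section BoundedLinear.
Variables (R : realType) (V W : preHilbertType R) (F : V -> W).
Hypothesis hF : bounded_linear F.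

Lemma bounded_linearD x y : F (x + y) = F x + F y.
Proof. by have := hF.1 1 x y; rewrite !scale1r. Qed.

Lemma bounded_linear0 : F 0 = 0.
Proof. by apply: (addrI (F 0)); rewrite -bounded_linearD !addr0. Qed.

Lemma bounded_linearZ (a : R[i]) x : F (a *: x) = a *: F x.
Proof. by have := hF.1 a x 0; rewrite !addr0 bounded_linear0 addr0. Qed.

Lemma bounded_linearN x : F (- x) = - F x.
Proof. by rewrite -scaleN1r bounded_linearZ scaleN1r. Qed.

End BoundedLinear.

Lemma bounded_linear_add (R : realType) (V W : preHilbertType R) (F G : V -> W) :
  bounded_linear F -> bounded_linear G -> bounded_linear (fun x => F x + G x).
Proof.
move=> hF hG; split=> [a x y|].
  by rewrite hF.1 hG.1 scalerDr addrACA.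
have [cF hcF] := hF.2; have [cG hcG] := hG.2; exists (cF + cG) => x.
apply: le_trans (seminormD (hnorm_seminorm W) _ _) _.
by have := hcF x; have := hcG x; lra.
Qed.

Section GFrame.
Variables (R : realType) (H K : hilbertType R).
Variables (d : measure_display) (Om : measurableType d).
Variables (mu : {measure set Om -> \bar R}) (Ksub : Om -> set K).
Hypothesis horth : forall w w' : Om, w <> w' -> forall x y : K,
  Ksub w x -> Ksub w' y -> cinner x y = 0.
Variable F : Om -> H -> K.
Hypothesis hF : cont_gframe mu Ksub F.

Lemma gframe_section f : measurable_section Ksub (fun w => F w f).
Proof. by split; [exact: hF.2.1 | move=> w; exact: (hF.1 w).2]. Qed.

Lemma gframe_ae_eq0 f : {ae mu, forall w, F w f = 0} -> f = 0.
Proof.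
move=> /(sq_int_eq0 mu horth (gframe_section f)) F0.
have [A [B [A_gt0 [_ /(_ f)[+ _]]]]] := hF.2.2; rewrite F0 lee_fin => Af.
apply: hnorm_eq0; apply/le_anti; rewrite hnorm_ge0 andbT.
have : hnorm f ^+ 2 <= 0 by rewrite -(pmulr_rle0 _ A_gt0).
by have := hnorm_ge0 f; nra.
Qed.

End GFrame.

Definition sum_norm (R : realType) (H : preHilbertType R) (x : H * H) : R :=
  hnorm x.1 + hnorm x.2.

Lemma sum_norm_seminorm (R : realType) (H : preHilbertType R) : seminorm (@sum_norm R H).
Proof.
have hH := hnorm_seminorm H; split => [x y|r x].
  by rewrite /sum_norm; have := seminormD hH x.1 y.1; have := seminormD hH x.2 y.2; lra.
by rewrite /sum_norm !seminormZ // mulrDr.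
Qed.

Lemma sum_norm_complete (R : realType) (H : hilbertType R) : complete_for (@sum_norm R H).
Proof.
move=> u c hu; have hH := hnorm_seminorm H.
have hu1 k : hnorm ((u k.+1).1 - (u k).1) <= c / 4 ^+ k.
  by apply: le_trans (hu k); rewrite /sum_norm lerDl hnorm_ge0.
have hu2 k : hnorm ((u k.+1).2 - (u k).2) <= c / 4 ^+ k.
  by apply: le_trans (hu k); rewrite /sum_norm lerDr hnorm_ge0.
have [l1 ul1] := hilbert_complete (fun k => hu1 k).
have [l2 ul2] := hilbert_complete (fun k => hu2 k).
exists (l1, l2) => e e_gt0; have e2 : 0 < e / 2 by rewrite divr_gt0.
have [N1 hN1] := ul1 _ e2; have [N2 hN2] := ul2 _ e2.
exists (maxn N1 N2) => n Nn; rewrite /sum_norm /=.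
have := hN1 n (leq_trans (leq_maxl _ _) Nn); have := hN2 n (leq_trans (leq_maxr _ _) Nn).
lra.
Qed.

Section DisjointGFrames.
Variables (R : realType) (H K : hilbertType R).
Variables (d : measure_display) (Om : measurableType d).
Variables (mu : {measure set Om -> \bar R}) (Ksub : Om -> set K).
Hypothesis hKsub : forall w, closed_subspace (Ksub w).
Hypothesis horth : forall w w' : Om, w <> w' -> forall x y : K,
  Ksub w x -> Ksub w' y -> cinner x y = 0.
Variables (L T : Om -> H -> K).
Hypotheses (hL : cont_gframe mu Ksub L) (hT : cont_gframe mu Ksub T).
Implicit Types x y : H * H.

Definition joint_analysis x w : K := L w x.1 + T w x.2.
Local Notation S := joint_analysis.

Definition joint_norm x : R := Num.sqrt (fine (sq_int mu (S x))).

Lemma joint_analysis_section x : measurable_section Ksub (S x).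
Proof. exact: measurable_sectionD (gframe_section hL _) (gframe_section hT _). Qed.

Lemma joint_analysisD x y w : S (x + y) w = S x w + S y w.
Proof.
by rewrite /S /= (bounded_linearD (hL.1 w).1) (bounded_linearD (hT.1 w).1) addrACA.
Qed.

Lemma joint_analysisZ (a : R[i]) x w : S (a *: x) w = a *: S x w.
Proof.
by rewrite /S /= (bounded_linearZ (hL.1 w).1) (bounded_linearZ (hT.1 w).1) scalerDr.
Qed.

Lemma joint_analysisB x y w : S (x - y) w = S x w - S y w.
Proof. by rewrite joint_analysisD -scaleN1r joint_analysisZ scaleN1r. Qed.

Lemma sq_int_joint_le : exists2 C, 0 <= C &
  forall x, (sq_int mu (S x) <= (C * (hnorm x.1 ^+ 2 + hnorm x.2 ^+ 2))%:E)%E.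
Proof.
have [AL [BL [AL_gt0 [ABL hBL]]]] := hL.2.2; have [AT [BT [AT_gt0 [ABT hBT]]]] := hT.2.2.
exists (2 * BL + 2 * BT) => [|x]; first lra.
have le2 w : hnorm (S x w) ^+ 2 <= 2 * hnorm (L w x.1) ^+ 2 + 2 * hnorm (T w x.2) ^+ 2.
  by have := hnormD_sqr_le (L w x.1) (T w x.2) ltr01; rewrite invr1.
apply: le_trans (sq_int_le_comb mu horth (joint_analysis_section x)
  (gframe_section hL x.1) (gframe_section hT x.2) (ler0n _ 2) (ler0n _ 2) le2) _.
apply: le_trans (leeD (lee_wpmul2l _ (hBL x.1).2) (lee_wpmul2l _ (hBT x.2).2)) _;
  rewrite ?lee_fin //.
by have := sqr_ge0 (hnorm x.1); have := sqr_ge0 (hnorm x.2); nra.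
Qed.

Lemma sq_int_joint_fin x : sq_int mu (S x) \is a fin_num.
Proof.
have [C _ hC] := sq_int_joint_le; rewrite ge0_fin_numE ?sq_int_ge0 //.
exact: le_lt_trans (hC x) (ltry _).
Qed.

Lemma sq_int_jointE x : sq_int mu (S x) = (joint_norm x ^+ 2)%:E.
Proof. by rewrite sqr_sqrtr ?fineK ?sq_int_joint_fin // fine_ge0 // sq_int_ge0. Qed.

Lemma joint_norm_seminorm : seminorm joint_norm.
Proof.
split=> [x y|r x].
  apply: sqrtr_le_add_of_young; rewrite ?fine_ge0 ?sq_int_ge0 // => t t_gt0.
  rewrite -lee_fin EFinD !EFinM !fineK ?sq_int_joint_fin //.
  apply: (sq_int_le_comb _ horth); try exact: joint_analysis_section.
  - by rewrite addr_ge0 // ltW.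
  - by rewrite addr_ge0 // ltW // invr_gt0.
  - by move=> w; rewrite joint_analysisD hnormD_sqr_le.
rewrite /joint_norm; have -> : S ((r%:C)%C *: x) = fun w => (r%:C)%C *: S x w.
  by apply/funext => w; rewrite joint_analysisZ.
rewrite (sq_int_scale _ horth _ (joint_analysis_section x)) sq_int_jointE -EFinM /=.
by rewrite sqrtrM ?sqr_ge0 // !sqrtr_sqr [`|joint_norm x|]ger0_norm // sqrtr_ge0.
Qed.

Lemma joint_norm_le : exists C, forall x, joint_norm x <= C * sum_norm x.
Proof.
have [C C_ge0 hC] := sq_int_joint_le; exists (Num.sqrt C) => x.
rewrite /sum_norm -[_ + _]ger0_norm ?addr_ge0 ?hnorm_ge0 // -sqrtr_sqr -sqrtrM //.
apply: ler_wsqrtr; have := hC x; rewrite sq_int_jointE lee_fin sqr_sqrtr ?fine_ge0 ?sq_int_ge0 //.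
move/le_trans; apply; apply: ler_wpM2l => //.
by have := hnorm_ge0 x.1; have := hnorm_ge0 x.2; nra.
Qed.

Lemma gframe_sum_upper_bound : exists2 B, 0 <= B &
  forall f, (sq_int mu (fun w => (L w f + T w f)%R) <= (B * hnorm f ^+ 2)%:E)%E.
Proof.
have [C C_ge0 hC] := sq_int_joint_le; exists (2 * C) => [|f]; first lra.
by apply: le_trans (hC (f, f)) _; rewrite lee_fin /=; nra.
Qed.

Hypothesis hdisj : gframes_disjoint mu Ksub L T.

Lemma joint_norm_eq0 x : joint_norm x = 0 -> x = 0.
Proof.
move=> x0; have : sq_int mu (S x) = 0%E by rewrite sq_int_jointE x0 expr0n.
move/(sq_int_eq0 mu horth (joint_analysis_section x)) => Sx0.
have x1 : x.1 = 0.
  apply: (gframe_ae_eq0 horth hL); apply: (hdisj.1 x.1 (- x.2)).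
  apply: filterS Sx0 => w; rewrite /S (bounded_linearN (hT.1 w).1) => /eqP.
  by rewrite addr_eq0 => /eqP.
have x2 : x.2 = 0.
  apply: (gframe_ae_eq0 horth hT); apply: filterS Sx0 => w.
  by rewrite /S x1 (bounded_linear0 (hL.1 w).1) add0r.
by case: x x1 x2 {x0 Sx0} => a b /= -> ->.
Qed.

Lemma joint_analysis_closed_range (u : nat -> H * H) (F : Om -> K) (b : R) :
  in_hatK mu Ksub F ->
  (forall n, (sq_int mu (fun w => (F w - S (u n) w)%R) <= (b / 4 ^+ n)%:E)%E) ->
  exists l, {ae mu, forall w, F w = S l w}.
Proof.
move=> hF hb.
have F_lim : (fun n => sq_int mu (fun w => L w (u n).1 + T w (u n).2 - F w)) @ \oo --> 0%E.
  apply: (squeeze_cvge _ (cvg_cst 0%E) (cvg_geometric4 b)); apply: nearW => n.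
  have -> : sq_int mu (fun w => L w (u n).1 + T w (u n).2 - F w) =
            sq_int mu (fun w => (F w - S (u n) w)%R).
    by apply: eq_integral => w _; rewrite (seminormB_sym (hnorm_seminorm K)).
  by rewrite sq_int_ge0 hb.
by have [f [g Ffg]] := hdisj.2 _ _ F hF F_lim; exists (f, g).
Qed.

Lemma joint_norm_complete : complete_for joint_norm.
Proof.
move=> u c hu; have hJ := joint_norm_seminorm.
have c_ge0 : 0 <= c by have := le_trans (seminorm_ge0 hJ _) (hu 0%N); rewrite expr0 divr1.
have step k : (sq_int mu (fun w => (S (u k.+1) w - S (u k) w)%R) <= ((c / 4 ^+ k) ^+ 2)%:E)%E.
  have -> : (fun w => S (u k.+1) w - S (u k) w) = S (u k.+1 - u k).
    by apply/funext => w; rewrite joint_analysisB.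
  by rewrite sq_int_jointE lee_fin; have := hu k; have := seminorm_ge0 hJ (u k.+1 - u k); nra.
have S0_lty : (sq_int mu (S (u 0%N)) < +oo)%E by rewrite sq_int_jointE ltry.
have [F hF F_near] := riesz_fischer_sections hKsub horth
  (fun k => joint_analysis_section (u k)) S0_lty step.
have [l Fl] := joint_analysis_closed_range hF F_near.
exists l; apply: (converges_in_geometric (b := 2) (c := 3 * c)) => // k.
have : joint_norm (u k - l) ^+ 2 <= 8 * c ^+ 2 / 4 ^+ k.
  rewrite (seminormB_sym hJ) -lee_fin -sq_int_jointE.
  rewrite (sq_int_ae_eq horth (G2 := fun w => F w - S (u k) w)) ?F_near //.
  - exact: joint_analysis_section.
  - apply: measurable_sectionD => //; first exact: (conj hF.1 hF.2.1).
    exact/measurable_sectionN/joint_analysis_section.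
  - by apply: filterS Fl => w ->; rewrite joint_analysisB.
have c2k : 0 <= 3 * c / 2 ^+ k by rewrite divr_ge0 ?mulr_ge0 ?exprn_ge0.
have : 8 * c ^+ 2 / 4 ^+ k <= (3 * c / 2 ^+ k) ^+ 2.
  rewrite expr_div_n sqr_exp2 ler_pM2r ?invr_gt0 ?exprn_gt0 // exprMn.
  by have := sqr_ge0 c; lra.
by have := seminorm_ge0 hJ (u k - l); nra.
Qed.

Lemma gframe_sum_lower_bound : exists2 A, 0 < A &
  forall f, ((A * hnorm f ^+ 2)%:E <= sq_int mu (fun w => (L w f + T w f)%R))%E.
Proof.
have [C hC] := joint_norm_le.
have [M hM] := complete_seminorms_equiv joint_norm_seminorm joint_norm_complete
  (@sum_norm_seminorm _ H) (@sum_norm_complete _ H) joint_norm_eq0 hC.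
have M2_gt0 : 0 < M ^+ 2 + 1 by rewrite ltr_wpDl ?sqr_ge0.
exists (M ^+ 2 + 1)^-1 => [|f]; first by rewrite invr_gt0.
rewrite -[sq_int _ _]/(sq_int mu (S (f, f))) sq_int_jointE lee_fin mulrC ler_pdivrMr //.
have := hM (f, f); rewrite /sum_norm /= => le_fJ.
by have := hnorm_ge0 f; have := seminorm_ge0 joint_norm_seminorm (f, f); nra.
Qed.

End DisjointGFrames.

Theorem corollary2p5 (R : realType) (H K : hilbertType R)
  (d : measure_display) (Om : measurableType d)
  (mu : {measure set Om -> \bar R})
  (Ksub : Om -> set K)
  (hKsub : forall w, closed_subspace (Ksub w))
  (horth : forall w w' : Om, w <> w' -> forall x y : K,
      Ksub w x -> Ksub w' y -> cinner x y = 0)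
  (L T : Om -> H -> K)
  (hL : cont_gframe mu Ksub L) (hT : cont_gframe mu Ksub T)
  (hdisj : gframes_disjoint mu Ksub L T) :
  cont_gframe mu Ksub (fun w f => L w f + T w f).
Proof.
split.
  move=> w; split; first exact: bounded_linear_add (hL.1 w).1 (hT.1 w).1.
  by move=> f; apply: closed_subspaceD; [|exact: (hL.1 w).2|exact: (hT.1 w).2].
split; first by move=> f; exact: (joint_analysis_section hKsub horth hL hT (f, f)).1.
have [A A_gt0 lower] := gframe_sum_lower_bound hKsub horth hL hT hdisj.
have [B B_ge0 upper] := gframe_sum_upper_bound hKsub horth hL hT.
exists A, (A + B); do !split => //; first by rewrite lerDl.
by apply: le_trans (upper f) _; rewrite lee_fin ler_wpM2r ?sqr_ge0 // lerDr ltW.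
Qed.
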